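(* For every integer $L\ge3$, the class of MPNNs cannot count $L$-paths at graph level and cannot count $L$-cycles at graph level. That is, for each $L\ge3$ there exist graphs $G_1,G_2$ with $C(L\text{-path},G_1)\ne C(L\text{-path},G_2)$ and $C(L\text{-cycle},G_1)\ne C(L\text{-cycle},G_2)$ such that every MPNN gives $h_{G_1}=h_{G_2}$.
   Context: Graphs are finite, simple, undirected, $G=(V,E)$, possibly carrying node attributes $x_v$ and edge attributes $e_{u,v}$ (a fixed constant when absent). $N(v)$ is the neighbour set of $v$. For $L\ge1$, an $L$-path is a sequence of edges $(v_1,v_2),\dots,(v_L,v_{L+1})$ with $v_1,\dots,v_{L+1}$ pairwise distinct; for $L\ge3$, an $L$-cycle is such a sequence with $v_1,\dots,v_L$ pairwise distinct and $v_{L+1}=v_1$. Two paths (resp. cycles) are identified when their edge sets coincide; $C(L\text{-path},G)$, $C(L\text{-cycle},G)$ are the numbers of inequivalent $L$-paths, $L$-cycles of $G$. A class $\mathcal F$ of functions on graphs can count $S$ at graph level if for all $G_1,G_2$ with $C(S,G_1)\ne C(S,G_2)$ there is $f\in\mathcal F$ with $f(G_1)\ne f(G_2)$. MPNNs. An MPNN is specified by $T$, arbitrary functions $M_t$ (values in some $\mathbb R^{d_t}$), $U_t$, and an arbitrary readout $R_{\text{graph}}$ on finite multisets: $h^{(0)}_i=x_i$, $h^{(t+1)}_i=U_t\big(h^{(t)}_i,\sum_{j\in N(i)}M_t(h^{(t)}_i,h^{(t)}_j,e_{i,j})\big)$, and $h_G=R_{\text{graph}}(\{\!\{h^{(T)}_i:i\in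 V\}\!\})$. The graph-level function computed is $G\mapsto h_G$; the class of MPNNs consists of all such choices. *)

From HB Require Import structures.
From mathcomp Require Import all_boot all_order all_algebra.
From mathcomp Require Import reals.
From Stdlib Require Import List Permutation.
Set Implicit Arguments. Unset Strict Implicit. Unset Printing Implicit Defensive.
Import GRing.Theory Num.Theory.
Local Open Scope ring_scope.

Record graph (X E : Type) := Graph {
  gV : finType;
  adj : rel gV;
  adj_sym : symmetric adj;
  adj_irr : irreflexive adj;
  feat : gV -> X;
  efeat : gV -> gV -> E;
  efeat_sym : forall u v, efeat u v = efeat v u }.

Definition is_path X E (G : graph X E) (L : nat) (p : {ffun 'I_L.+1 -> gV G}) : bool :=
  injectiveb p && [forall i : 'I_L, adj (p (inord i)) (p (inord i.+1))].

Definition path_edges X E (G : graph X E) (L : nat) (p : {ffun 'I_L.+1 -> gV G})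
  : {set {set gV G}} :=
  [set [set p (inord i); p (inord i.+1)] | i : 'I_L].

Definition count_paths X E (G : graph X E) (L : nat) : nat :=
  #|[set path_edges p | p in [pred p | @is_path X E G L p]]|.

Definition is_cycle X E (G : graph X E) (L : nat) (p : {ffun 'I_L -> gV G}) : bool :=
  injectiveb p && [forall i : 'I_L, adj (p i) (p (ordS i))].

Definition cycle_edges X E (G : graph X E) (L : nat) (p : {ffun 'I_L -> gV G})
  : {set {set gV G}} :=
  [set [set p i; p (ordS i)] | i : 'I_L].

Definition count_cycles X E (G : graph X E) (L : nat) : nat :=
  #|[set cycle_edges p | p in [pred p | @is_cycle X E G L p]]|.

Definition layer_ty (X : Type) (Hs : nat -> Type) (t : nat) : Type :=
  match t with 0 => X | n.+1 => Hs n end.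

Record mpnn (R : realType) (X E : Type) := MPNN {
  nT : nat;
  Hs : nat -> Type;                           (* Hs t = type of h^(t+1) *)
  dim : nat -> nat;
  Msg : forall t, layer_ty X Hs t -> layer_ty X Hs t -> E -> 'rV[R]_(dim t);
  Upd : forall t, layer_ty X Hs t -> 'rV[R]_(dim t) -> layer_ty X Hs t.+1;
  Out : Type;
  (* readout on finite multisets = permutation-invariant function on lists *)
  readout : list (layer_ty X Hs nT) -> Out;
  readout_perm : forall s1 s2, Permutation s1 s2 -> readout s1 = readout s2 }.

Fixpoint hstate (R : realType) X E (N : mpnn R X E) (G : graph X E) (t : nat)
  : gV G -> layer_ty X (Hs N) t :=
  match t as t0 return gV G -> layer_ty X (Hs N) t0 with
  | 0 => fun i => feat i
  | t'.+1 => fun i =>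
      @Upd R X E N t' (@hstate R X E N G t' i)
        (\sum_(j | adj i j) @Msg R X E N t' (@hstate R X E N G t' i) (@hstate R X E N G t' j) (efeat i j))
  end.

Definition mpnn_out (R : realType) X E (N : mpnn R X E) (G : graph X E) : Out N :=
  @readout R X E N (map (@hstate R X E N G (nT N)) (enum (gV G))).

(** With constant node and edge attributes, every MPNN assigns the same
    hidden state to all nodes of a [d]-regular graph at every layer (by
    induction on the layer: every node aggregates [d] identical messages), so
    its output only depends on the number of nodes.  The cycle [C_2L] and two
    disjoint copies of [C_L] are both 2-regular on [2L] nodes.  [C_2L] has an
    [L]-path but no [L]-cycle, since the vertex set of a cycle in [C_n] is
    closed under the successor map and is therefore everything.  [C_L + C_L]
    has an [L]-cycle but no [L]-path, since a path stays inside one component,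
    which has only [L] vertices. *)

From mathcomp Require Import all_boot all_order all_algebra zify.
From mathcomp Require Import reals.
Set Implicit Arguments. Unset Strict Implicit. Unset Printing Implicit Defensive.
Import GRing.Theory.

Definition uniform_regular X E (x0 : X) (e0 : E) (d : nat) (G : graph X E) :=
  [/\ forall v : gV G, feat v = x0,
      forall u v : gV G, efeat u v = e0
    & forall v : gV G, #|[pred w | adj v w]| = d].

Section RegularMPNN.
Variables (R : realType) (X E : Type) (x0 : X) (e0 : E) (d : nat) (N : mpnn R X E).

Fixpoint regular_state (t : nat) : layer_ty X (Hs N) t :=
  match t as t0 return layer_ty X (Hs N) t0 with
  | 0 => x0
  | t'.+1 => Upd (regular_state t') (Msg (regular_state t') (regular_state t') e0 *+ d)
  end.

Lemma hstate_uniform_regular (G : graph X E) t (v : gV G) :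
  uniform_regular x0 e0 d G -> hstate N t v = regular_state t.
Proof.
case=> featG efeatG degG; elim: t v => [|t IH] v /=; first exact: featG.
rewrite IH -[in RHS](degG v) -sumr_const.
by congr Upd; apply: eq_big => [w|w _]; rewrite ?inE // IH efeatG.
Qed.

Lemma mpnn_out_uniform_regular (G1 G2 : graph X E) :
  uniform_regular x0 e0 d G1 -> uniform_regular x0 e0 d G2 ->
  #|gV G1| = #|gV G2| -> mpnn_out N G1 = mpnn_out N G2.
Proof.
have outE G : uniform_regular x0 e0 d G ->
    mpnn_out N G = readout (nseq #|gV G| (regular_state (nT N))).
  move=> regG; rewrite /mpnn_out cardE; congr readout.
  by elim: (enum (gV G)) => //= v s ->; rewrite hstate_uniform_regular.
by move=> reg1 reg2 card12; rewrite !outE // card12.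
Qed.

End RegularMPNN.

Lemma iter_ordS n (v : 'I_n) k : iter k (@ordS n) v = (v + k) %% n :> nat.
Proof.
elim: k => [|k IH] /=; first by rewrite addn0 modn_small.
by rewrite IH addnS -addn1 modnDml addn1.
Qed.

Lemma iter_ordS_neq n (v : 'I_n) k : 0 < k < n -> iter k (@ordS n) v != v.
Proof.
move=> k_bounds; apply/eqP => /(congr1 val); rewrite /= iter_ordS.
have v_lt := ltn_ord v; case: (ltnP (v + k) n) => [vk_lt|vk_ge].
  by rewrite modn_small //; lia.
have -> : v + k = (v + k - n) + n by lia.
by rewrite modnDr modn_small; lia.
Qed.

Lemma ordS_neq n (v : 'I_n) : 1 < n -> ordS v != v.
Proof. by move=> n_gt1; apply: (@iter_ordS_neq _ _ 1); lia. Qed.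

Lemma ordS_neq_ord_pred n (v : 'I_n) : 2 < n -> ordS v != ord_pred v.
Proof.
move=> n_gt2; rewrite -(inj_eq (@ordS_inj n)) ord_predK.
by apply: (@iter_ordS_neq _ _ 2); lia.
Qed.

Lemma ordS_closed_setT n (S : {set 'I_n}) v :
  v \in S -> {in S, forall u, ordS u \in S} -> S = setT.
Proof.
move=> Sv closedS; apply/setP => w; rewrite inE.
have iterS k : iter k (@ordS n) v \in S by elim: k => //= k; apply: closedS.
suff -> : w = iter (w + n - v) (@ordS n) v by apply: iterS.
apply: val_inj; rewrite /= iter_ordS.
have -> : v + (w + n - v) = w + n by have := ltn_ord v; lia.
by rewrite modnDr modn_small.
Qed.

(* The guard [u != v] keeps the relation irreflexive for [n = 1], where [ordS] is the identity. *)
Definition cycle_adj n : rel 'I_n :=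
  fun u v => (u != v) && ((v == ordS u) || (u == ordS v)).

Lemma cycle_adj_sym n : symmetric (@cycle_adj n).
Proof. by move=> u v; rewrite /cycle_adj eq_sym orbC. Qed.

Lemma cycle_adj_irr n : irreflexive (@cycle_adj n).
Proof. by move=> u; rewrite /cycle_adj eqxx. Qed.

Lemma cycle_adj_ordS n (u : 'I_n) : 1 < n -> cycle_adj u (ordS u).
Proof. by move=> n_gt1; rewrite /cycle_adj eq_sym ordS_neq ?eqxx. Qed.

Lemma cycle_adjE n (v w : 'I_n) :
  2 < n -> cycle_adj v w = (w == ordS v) || (w == ord_pred v).
Proof.
move=> n_gt2; rewrite /cycle_adj.
have -> : (v == ordS w) = (w == ord_pred v) by rewrite eq_sym (canF_eq (@ordSK n)).
case: (eqVneq w (ordS v)) => [->|_] /=; first by rewrite eq_sym ordS_neq //; lia.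
case: (eqVneq w (ord_pred v)) => [->|_] /=; last by rewrite andbF.
rewrite andbT; apply/eqP => /(congr1 (@ordS n)); rewrite ord_predK.
by apply/eqP/ordS_neq; lia.
Qed.

Lemma cycle_adj_deg n (v : 'I_n) : 2 < n -> #|[pred w | cycle_adj v w]| = 2.
Proof.
move=> n_gt2; have := cards2 (ordS v) (ord_pred v).
rewrite ordS_neq_ord_pred // => <-.
by apply: eq_card => w; rewrite !inE cycle_adjE.
Qed.

Lemma ordS_mem_cycle_adj n (v a b : 'I_n) :
  2 < n -> cycle_adj v a -> cycle_adj v b -> a != b -> ordS v \in [:: a; b].
Proof.
move=> n_gt2; rewrite !cycle_adjE // !inE.
case/orP=> /eqP->; first by rewrite eqxx.
by case/orP=> /eqP->; rewrite eqxx ?orbT.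
Qed.

Definition two_cycles_adj n : rel (bool * 'I_n) :=
  fun x y => (x.1 == y.1) && cycle_adj x.2 y.2.

Lemma two_cycles_adj_sym n : symmetric (@two_cycles_adj n).
Proof. by move=> x y; rewrite /two_cycles_adj eq_sym cycle_adj_sym. Qed.

Lemma two_cycles_adj_irr n : irreflexive (@two_cycles_adj n).
Proof. by move=> x; rewrite /two_cycles_adj cycle_adj_irr andbF. Qed.

Lemma two_cycles_adj_deg n (x : bool * 'I_n) :
  2 < n -> #|[pred y | two_cycles_adj x y]| = 2.
Proof.
move=> n_gt2; have := cards2 (x.1, ordS x.2) (x.1, ord_pred x.2).
rewrite xpair_eqE eqxx ordS_neq_ord_pred // => <-.
apply: eq_card => -[b w]; rewrite !inE /two_cycles_adj cycle_adjE // !xpair_eqE /=.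
by rewrite (eq_sym b) -andb_orr.
Qed.

Section CycleGraphs.
Variables (X E : Type) (x0 : X) (e0 : E).

Definition cycle_graph n : graph X E :=
  @Graph X E 'I_n (@cycle_adj n) (@cycle_adj_sym n) (@cycle_adj_irr n)
    (fun _ => x0) (fun _ _ => e0) (fun _ _ => erefl).

Definition two_cycles n : graph X E :=
  @Graph X E (bool * 'I_n)%type (@two_cycles_adj n) (@two_cycles_adj_sym n)
    (@two_cycles_adj_irr n) (fun _ => x0) (fun _ _ => e0) (fun _ _ => erefl).

Lemma cycle_graph_uniform_regular n : 2 < n -> uniform_regular x0 e0 2 (cycle_graph n).
Proof. by move=> n_gt2; split=> // v; apply: cycle_adj_deg. Qed.

Lemma two_cycles_uniform_regular n : 2 < n -> uniform_regular x0 e0 2 (two_cycles n).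
Proof. by move=> n_gt2; split=> // v; apply: two_cycles_adj_deg. Qed.

Lemma count_paths_gt0 (G : graph X E) L (p : {ffun 'I_L.+1 -> gV G}) :
  is_path p -> 0 < count_paths G L.
Proof.
by move=> path_p; rewrite card_gt0; apply/set0Pn; exists (path_edges p); apply: imset_f.
Qed.

Lemma count_paths_eq0 (G : graph X E) L :
  (forall p, ~~ @is_path X E G L p) -> count_paths G L = 0.
Proof.
move=> no_path; apply/eqP; rewrite cards_eq0; apply/eqP/setP => s; rewrite inE.
by apply/imsetP => -[p]; rewrite inE (negbTE (no_path p)).
Qed.

Lemma count_cycles_gt0 (G : graph X E) L (p : {ffun 'I_L -> gV G}) :
  is_cycle p -> 0 < count_cycles G L.
Proof.
by move=> cycle_p; rewrite card_gt0; apply/set0Pn; exists (cycle_edges p); apply: imset_f.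
Qed.

Lemma count_cycles_eq0 (G : graph X E) L :
  (forall p, ~~ @is_cycle X E G L p) -> count_cycles G L = 0.
Proof.
move=> no_cycle; apply/eqP; rewrite cards_eq0; apply/eqP/setP => s; rewrite inE.
by apply/imsetP => -[p]; rewrite inE (negbTE (no_cycle p)).
Qed.

Lemma count_paths_cycle_graph_gt0 n L : L < n -> 0 < count_paths (cycle_graph n) L.
Proof.
move=> L_lt.
apply: (@count_paths_gt0 (cycle_graph n) _ [ffun i : 'I_L.+1 => widen_ord L_lt i]).
apply/andP; split.
  by apply/injectiveP => i j; rewrite !ffunE => /(congr1 val) ij_eq; apply: val_inj.
apply/forallP => i; rewrite !ffunE /=.
have -> : widen_ord L_lt (inord i.+1) = ordS (widen_ord L_lt (inord i)).
  by apply: val_inj; rewrite /= !inordK ?modn_small //; have := ltn_ord i; lia.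
by apply: cycle_adj_ordS; have := ltn_ord i; lia.
Qed.

(* [2 < L] is needed: [is_cycle] accepts a single edge traversed back and forth as a 2-cycle. *)
Lemma count_cycles_cycle_graph n L : 2 < n -> 2 < L -> L != n ->
  count_cycles (cycle_graph n) L = 0.
Proof.
move=> n_gt2 L_gt2 L_neq; apply: count_cycles_eq0 => p; apply/negP.
case/andP=> /injectiveP p_inj /forallP p_adj.
have closed_img : {in p @: setT, forall u, ordS u \in p @: setT}.
  move=> _ /imsetP[i _ ->].
  have pred_adj : cycle_adj (p i) (p (ord_pred i)).
    by rewrite cycle_adj_sym; have := p_adj (ord_pred i); rewrite ord_predK.
  have neq : p (ordS i) != p (ord_pred i).
    by rewrite (inj_eq p_inj) ordS_neq_ord_pred //; lia.
  have := ordS_mem_cycle_adj n_gt2 (p_adj i) pred_adj neq.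
  by case/predU1P=> [|/predU1P[|//]] ->; apply: imset_f.
have L_gt0 : 0 < L by lia.
have img_full := ordS_closed_setT (imset_f p (in_setT (Ordinal L_gt0))) closed_img.
have := card_imset setT p_inj; rewrite img_full !cardsT !card_ord => /eqP.
by rewrite eq_sym (negbTE L_neq).
Qed.

Lemma count_cycles_two_cycles_gt0 n : 1 < n -> 0 < count_cycles (two_cycles n) n.
Proof.
move=> n_gt1.
apply: (@count_cycles_gt0 (two_cycles n) _ [ffun i : 'I_n => (false, i)]).
apply/andP; split; first by apply/injectiveP => i j; rewrite !ffunE => -[].
by apply/forallP => i; rewrite !ffunE /two_cycles_adj /=; apply: cycle_adj_ordS.
Qed.

Lemma count_paths_two_cycles n L : n <= L -> count_paths (two_cycles n) L = 0.
Proof.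
move=> n_le; apply: count_paths_eq0 => p; apply/negP.
case/andP=> /injectiveP p_inj /forallP p_adj.
have same_copy m : m < L.+1 -> (p (inord m)).1 = (p ord0).1.
  elim: m => [|m IH] m_lt; first by congr (p _).1; apply: val_inj; rewrite /= inordK.
  by have /andP[/eqP <- _] := p_adj (Ordinal (m_lt : m < L)); apply: IH; apply: ltnW.
have snd_inj : injective (fun i => (p i).2).
  move=> i j eq_snd; apply: p_inj; apply: injective_projections => //.
  by rewrite -(inord_val i) -(inord_val j) !same_copy.
by have := leq_card _ snd_inj; rewrite !card_ord; lia.
Qed.

End CycleGraphs.

Theorem theorem7 (R : realType) (X E : Type) (x0 : X) (e0 : E) (L : nat) :
  3 <= L ->
  exists G1 G2 : graph X E,
    count_paths G1 L <> count_paths G2 L /\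
    count_cycles G1 L <> count_cycles G2 L /\
    forall N : mpnn R X E, mpnn_out N G1 = mpnn_out N G2.
Proof.
move=> L_ge3; exists (cycle_graph x0 e0 (2 * L)), (two_cycles x0 e0 L).
split; [|split].
- rewrite count_paths_two_cycles //; apply/eqP; rewrite -lt0n.
  by apply: count_paths_cycle_graph_gt0; lia.
- rewrite count_cycles_cycle_graph; [|lia..]; apply/eqP; rewrite eq_sym -lt0n.
  by apply: count_cycles_two_cycles_gt0; lia.
- have reg1 : uniform_regular x0 e0 2 (cycle_graph x0 e0 (2 * L)).
    by apply: cycle_graph_uniform_regular; lia.
  have reg2 : uniform_regular x0 e0 2 (two_cycles x0 e0 L).
    by apply: two_cycles_uniform_regular; lia.
  move=> N; apply: (mpnn_out_uniform_regular N reg1 reg2).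
  by rewrite /= card_prod card_bool !card_ord.
Qed.
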